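(* Assume product-form weights $w^t_i=u(i)v(m_t)$. For each $t\ge1$ let $c_t\in[1,2]$ and set $\beta^c_t:=\beta^*_t/c_t$, with $\beta^c_0=\beta^*_0\in(0,\infty)$. Then for every $x_{1:n}\in\mathcal X^n$ ($n\ge1$), $$R^{\vec\beta^c}_S(x_{1:n}) \le R^{\vec\beta^*}_S(x_{1:n}) + (m-1)\ln2 ,$$ and hence $$R^{\vec\beta^c}_S(x_{1:n}) \le \mathrm{CL}_w(\mathcal A) - (m-1)\ln m + \sum_{j\in\mathcal A}\tfrac12\ln n_j - \tfrac12\ln n + \tfrac32 m\ln\ln\frac{2n}{m} + 2.33m + 0.86 + (m-1)\ln 2.$$
   Context: Let $\mathcal X$ be a finite base alphabet. For $x_{1:n}\in\mathcal X^n$, $n_i$ is the number of occurrences of $i$, $\mathcal A=\{x_1,\dots,x_n\}$, $m=|\mathcal A|$; for $0\le t\le n$, $\mathcal A_t=\{x_1,\dots,x_t\}$ ($\mathcal A_0=\emptyset$), $m_t=|\mathcal A_t|$, $n^t_i$ the count of $i$ in $x_{1:t}$. Product-form weights: $u:\mathcal X\to(0,\infty)$, $v:\{0,1,\dots\}\to(0,\infty)$ with $w^t_i:=u(i)v(m_t)$ and $\sum_{k\in\mathcal X\setminus\mathcal A_t}w^t_k\le1$. For a sequence $\vec\beta=(\beta_0,\beta_1,\dots)$ of positive reals, $S^{\vec\beta}(x_{t+1}=i\mid x_{1:t})=n^t_i/(t+\beta_t)$ if $n^t_i>0$ and $\beta_t w^t_i/(t+\beta_t)$ if $n^t_i=0$,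 $S^{\vec\beta}(x_{1:n})=\prod_{t=0}^{n-1}S^{\vec\beta}(x_{t+1}\mid x_{1:t})$, and $R^{\vec\beta}_S(x_{1:n}):=\ln\big(n^{-n}\prod_{j\in\mathcal A}n_j^{n_j}\big)-\ln S^{\vec\beta}(x_{1:n})$. $\vec\beta^*$ is given by $\beta^*_t:=m_t/\ln\frac{t+1}{m_t}$ for $t\ge1$ and any $\beta^*_0\in(0,\infty)$. $\mathrm{CL}_w(\mathcal A):=\sum_{t\in\{0,\dots,n-1\}:\,x_{t+1}\notin\mathcal A_t}\ln(1/w^t_{x_{t+1}})$. Natural logarithms. *)

From Stdlib Require Import Reals List.
Import ListNotations.
Open Scope R_scope.

Section Seqs.
Variable X : Type.
Variable eq_dec : forall a b : X, {a = b} + {a <> b}.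

Definition cnt (p : list X) (i : X) : nat := count_occ eq_dec p i.

Definition mdist (p : list X) : nat := length (nodup eq_dec p).

Variables (u : X -> R) (v : nat -> R).

Definition wt (p : list X) (i : X) : R := u i * v (mdist p).

(* S^beta(x_{t+1} = i | x_{1:t}), with p = x_{1:t}, t = length p *)
Definition Scond (beta : nat -> R) (p : list X) (i : X) : R :=
  let t := length p in
  if (0 <? cnt p i)%nat
  then INR (cnt p i) / (INR t + beta t)
  else beta t * wt p i / (INR t + beta t).

Fixpoint Saux (beta : nat -> R) (p rest : list X) : R :=
  match rest with
  | [] => 1
  | a :: r => Scond beta p a * Saux beta (p ++ [a]) r
  end.

Definition Sprob (beta : nat -> R) (xs : list X) : R := Saux beta [] xs.

Definition ML (xs : list X) : R :=
  ln (/ (INR (length xs)) ^ (length xs) *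
      fold_right (fun j acc => INR (cnt xs j) ^ (cnt xs j) * acc) 1
                 (nodup eq_dec xs)).

Definition regret (beta : nat -> R) (xs : list X) : R :=
  ML xs - ln (Sprob beta xs).

Definition betastar (b0 : R) (xs : list X) (t : nat) : R :=
  match t with
  | O => b0
  | S _ => INR (mdist (firstn t xs)) /
           ln ((INR t + 1) / INR (mdist (firstn t xs)))
  end.

Definition betac (b0 : R) (c : nat -> R) (xs : list X) (t : nat) : R :=
  match t with
  | O => b0
  | S _ => betastar b0 xs t / c t
  end.

Fixpoint CLaux (p rest : list X) : R :=
  match rest with
  | [] => 0
  | a :: r =>
      (if in_dec eq_dec a p then 0 else ln (/ wt p a)) + CLaux (p ++ [a]) r
  end.

Definition CL (xs : list X) : R := CLaux [] xs.

Definition sum_half_ln_counts (xs : list X) : R :=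
  fold_right (fun j acc => / 2 * ln (INR (cnt xs j)) + acc) 0
             (nodup eq_dec xs).

Definition unseen_weight (enumX : list X) (p : list X) : R :=
  fold_right (fun k acc => (if in_dec eq_dec k p then 0 else wt p k) + acc) 0
             enumX.

End Seqs.

From Stdlib Require Import Reals List Lra Psatz Lia Arith Permutation.
From Coquelicot Require Import Coquelicot.
Import ListNotations.
Open Scope R_scope.

(** Write R_opt and R_c for the regrets of S with beta^* and with
    beta^c_t = beta^*_t / c_t.  The proof has two parts.

    Dividing beta_t by c_t in [1, 2] can only raise the
       conditional probability of a repeated symbol (the denominator t + beta_t
       shrinks) and lowers that of a new symbol by a factor at most 2; the
       first symbol has the same probability w^0 under both.  Hence
       R_c <= R_opt + (m-1) ln 2.

    A potential V(x_{1:t}) = sum_j G(n^t_j) +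
       H(t) + Phi(t, m_t) is built so that at every step its increment
       dominates the increment of ln ML - ln S^{beta^*}, minus the code length
       ln (1/w) at new symbols.  Telescoping gives R_opt <= CL_w(A) + V(x_{1:n}),
       and V(x_{1:n}) is at most the right-hand side of the theorem.  The step
       inequalities reduce to two real inequalities about Phi (the "seen step"
       and the "new step"), proved from artanh-series bounds on ln and, in a
       bounded intermediate range, by explicit numerical interval checks. *)

Lemma le_of_derive_nonneg (f f' : R -> R) (a b : R) :
  a <= b ->
  (forall x, a <= x <= b -> is_derive f x (f' x)) ->
  (forall x, a <= x <= b -> 0 <= f' x) -> f a <= f b.
Proof.
  intros hab hd hpos. destruct (Req_dec a b) as [<-|hne]; [lra|].
  destruct (MVT_cor2 f f' a b) as [x [hdiff hx]]; [lra| |].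
  - intros x hx. apply is_derive_Reals. now apply hd.
  - assert (0 <= f' x) by (apply hpos; lra). nra.
Qed.

Lemma artanh_lower (x : R) : 0 <= x < 1 ->
  2*x + 2*x^3/3 <= ln (1+x) - ln (1-x).
Proof.
  intros hx.
  set (f := fun t => ln (1+t) - ln (1-t) - (2*t + 2*t^3/3)).
  assert (hf : f 0 <= f x).
  { apply (le_of_derive_nonneg f (fun t => 2*t^4/(1-t^2)) 0 x); [lra| |].
    - intros y hy. unfold f. auto_derive; [lra|]. field. split; try lra. nra.
    - intros y hy. apply Rmult_le_pos; [nra|]. apply Rlt_le, Rinv_0_lt_compat. nra. }
  unfold f in hf. rewrite Rplus_0_r, Rminus_0_r, ln_1 in hf. lra.
Qed.

Lemma artanh_upper (x : R) : 0 <= x < 1 ->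
  ln (1+x) - ln (1-x) <= 2*x + 2*x^3/(3*(1-x^2)).
Proof.
  intros hx.
  set (f := fun t => 2*t + 2*t^3/(3*(1-t^2)) - (ln (1+t) - ln (1-t))).
  assert (hf : f 0 <= f x).
  { apply (le_of_derive_nonneg f (fun t => 4*t^4/(3*(1-t^2)^2)) 0 x); [lra| |].
    - intros y hy. unfold f. auto_derive; [repeat split; try lra; nra|].
      field. repeat split; try lra; nra.
    - intros y hy. apply Rmult_le_pos; [nra|]. apply Rlt_le, Rinv_0_lt_compat.
      assert (0 < 1 - y^2) by nra. nra. }
  unfold f in hf. rewrite Rplus_0_r, Rminus_0_r, ln_1 in hf.
  replace (2*0 + 2*0^3/(3*(1-0^2))) with 0 in hf by field. lra.
Qed.

(** The artanh polynomials evaluated at x = (z-1)/(z+1), i.e. at the point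
    where ln((1+x)/(1-x)) = ln z. *)
Definition ln_lower_poly (z : R) : R :=
  let x := (z-1)/(z+1) in 2*x + 2*x^3/3.
Definition ln_upper_poly (z : R) : R :=
  let x := (z-1)/(z+1) in 2*x + 2*x^3/(3*(1-x^2)).

Lemma ln_as_artanh (z : R) : 0 < z ->
  ln z = ln (1 + (z-1)/(z+1)) - ln (1 - (z-1)/(z+1)).
Proof.
  intros hz. rewrite <- ln_div.
  - f_equal. field. split; lra.
  - replace (1 + (z-1)/(z+1)) with (2*z/(z+1)) by (field; lra).
    apply Rdiv_lt_0_compat; lra.
  - replace (1 - (z-1)/(z+1)) with (2/(z+1)) by (field; lra).
    apply Rdiv_lt_0_compat; lra.
Qed.

Lemma artanh_arg_range (z : R) : 1 <= z -> 0 <= (z-1)/(z+1) < 1.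
Proof.
  intros hz. split; [apply Rdiv_le_0_compat; lra|].
  apply Rmult_lt_reg_r with (z+1); [lra|].
  unfold Rdiv. rewrite Rmult_assoc, Rinv_l; lra.
Qed.

Lemma ln_ge_lower_poly (z : R) : 1 <= z -> ln_lower_poly z <= ln z.
Proof.
  intros hz. rewrite ln_as_artanh by lra.
  apply artanh_lower, artanh_arg_range, hz.
Qed.

Lemma ln_le_upper_poly (z : R) : 1 <= z -> ln z <= ln_upper_poly z.
Proof.
  intros hz. rewrite ln_as_artanh by lra.
  apply artanh_upper, artanh_arg_range, hz.
Qed.

Lemma ln_ge_first_order (z : R) : 1 <= z -> 2*((z-1)/(z+1)) <= ln z.
Proof.
  intros hz. pose proof (ln_ge_lower_poly z hz) as h. unfold ln_lower_poly in h.
  destruct (artanh_arg_range z hz) as [hx _].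
  assert (0 <= 2*((z-1)/(z+1))^3/3)
    by (apply Rmult_le_pos; [apply Rmult_le_pos; [lra|apply pow_le; lra]|lra]).
  lra.
Qed.

Lemma ln_le_sub1 (z : R) : 0 < z -> ln z <= z - 1.
Proof. intros hz. pose proof (exp_ineq1_le (ln z)). rewrite exp_ln in H; lra. Qed.

Lemma ln_ge_1_sub_inv (z : R) : 0 < z -> 1 - /z <= ln z.
Proof.
  intros hz. pose proof (ln_le_sub1 (/z) (Rinv_0_lt_compat _ hz)) as h.
  rewrite ln_Rinv in h by lra. lra.
Qed.

Lemma ln_1p_le (x : R) : 0 <= x -> ln (1 + x) <= x.
Proof. intros. pose proof (ln_le_sub1 (1+x)). lra. Qed.

Lemma ln_pos_of_gt1 (z : R) : 1 < z -> 0 < ln z.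
Proof. intros. rewrite <- ln_1. apply ln_increasing; lra. Qed.

Lemma ln2_bounds : 6929/10000 <= ln 2 <= 6933/10000.
Proof.
  replace 2 with ((4/3)*(3/2)) by field. rewrite ln_mult by lra.
  pose proof (ln_ge_lower_poly (4/3)) as a1. pose proof (ln_le_upper_poly (4/3)) as a2.
  pose proof (ln_ge_lower_poly (3/2)) as b1. pose proof (ln_le_upper_poly (3/2)) as b2.
  unfold ln_lower_poly, ln_upper_poly in *.
  specialize (a1 ltac:(lra)); specialize (a2 ltac:(lra));
  specialize (b1 ltac:(lra)); specialize (b2 ltac:(lra)).
  lra.
Qed.

Lemma ln4_bounds : 6929/5000 <= ln 4 <= 6933/5000.
Proof.
  replace 4 with (2*2) by ring. rewrite ln_mult by lra. pose proof ln2_bounds. lra.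
Qed.

(** Certificates for numerical bounds on ln y: compare y with a reference point
    r whose logarithm is known, and bound ln (y/r) by the artanh polynomials. *)
Lemma ln_ge_certificate (y r lr L : R) : 0 < r <= y -> lr <= ln r ->
  L <= lr + ln_lower_poly (y/r) -> L <= ln y.
Proof.
  intros hr hlr hL.
  assert (h : ln_lower_poly (y/r) <= ln (y/r)).
  { apply ln_ge_lower_poly. apply Rmult_le_reg_r with r; [lra|].
    unfold Rdiv. rewrite Rmult_assoc, Rinv_l; lra. }
  rewrite ln_div in h by lra. lra.
Qed.

Lemma ln_le_certificate (y r ur U : R) : 0 < r <= y -> ln r <= ur ->
  ur + ln_upper_poly (y/r) <= U -> ln y <= U.
Proof.
  intros hr hur hU.
  assert (h : ln (y/r) <= ln_upper_poly (y/r)).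
  { apply ln_le_upper_poly. apply Rmult_le_reg_r with r; [lra|].
    unfold Rdiv. rewrite Rmult_assoc, Rinv_l; lra. }
  rewrite ln_div in h by lra. lra.
Qed.

Lemma ln_ge_of_inv (q L : R) : 0 < q -> ln (/q) <= - L -> L <= ln q.
Proof. intros hq h. rewrite ln_Rinv in h by lra. lra. Qed.

(** [ln_numeric] proves a goal [L <= ln y] or [ln y <= U] for explicit rationals
    y, using the largest reference point among 4, 2, 1 below y (or 1/y if y < 1). *)
Ltac ln_numeric_with r lo hi :=
  match goal with
  | |- _ <= ln ?y =>
      apply (ln_ge_certificate y r lo); [lra | lra | unfold ln_lower_poly; cbv zeta; lra]
  | |- ln ?y <= _ =>
      apply (ln_le_certificate y r hi); [lra | lra | unfold ln_upper_poly; cbv zeta; lra]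
  end.

Ltac ln_numeric :=
  pose proof ln2_bounds; pose proof ln4_bounds; pose proof ln_1;
  first
    [ ln_numeric_with constr:(4) constr:(6929/5000) constr:(6933/5000)
    | ln_numeric_with constr:(2) constr:(6929/10000) constr:(6933/10000)
    | ln_numeric_with constr:(1) constr:(0) constr:(0)
    | apply ln_ge_of_inv; [lra | ln_numeric_with constr:(1) constr:(0) constr:(0)] ].

Lemma div_le_1 (a b : R) : 0 < b -> a <= b -> a / b <= 1.
Proof. intros. apply Rmult_le_reg_r with b; [lra|]. unfold Rdiv. rewrite Rmult_assoc, Rinv_l; lra. Qed.

Lemma one_le_div (a b : R) : 0 < b -> b <= a -> 1 <= a / b.
Proof. intros. apply Rmult_le_reg_r with b; [lra|]. unfold Rdiv. rewrite Rmult_assoc, Rinv_l; lra. Qed.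

Lemma one_lt_div (a b : R) : 0 < b -> b < a -> 1 < a / b.
Proof. intros. apply Rmult_lt_reg_r with b; [lra|]. unfold Rdiv. rewrite Rmult_assoc, Rinv_l; lra. Qed.

Lemma le_div_of_mul_le (a b m : R) : 0 < m -> a * m <= b -> a <= b / m.
Proof. intros. apply Rmult_le_reg_r with m; [lra|]. replace (b/m*m) with b by (field; lra). lra. Qed.

Lemma div_le_of_le_mul (a b m : R) : 0 < m -> b <= a * m -> b / m <= a.
Proof. intros. apply Rmult_le_reg_r with m; [lra|]. replace (b/m*m) with b by (field; lra). lra. Qed.

Lemma split_at (P : Prop) (y b : R) : (y <= b -> P) -> (b < y -> P) -> P.
Proof. intros h1 h2. destruct (Rle_dec y b); [auto | apply h2; lra]. Qed.

Definition Wpot (T m : R) : R := (T - m) * ln (T / (T - m)).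
Definition lnln (T m : R) : R := ln (ln (2*T/m)).
Definition Phi (T m : R) : R :=
  -(m-1)*ln m + Wpot T m + 3/2*m*lnln T m + 13/10*m - 14/100.

Lemma Phi_time_increment (T m : R) :
  Phi (T+1) m - Phi T m = (Wpot (T+1) m - Wpot T m) + 3/2*m*(lnln (T+1) m - lnln T m).
Proof. unfold Phi. ring. Qed.

Definition beta_opt (t m : R) : R := m / ln ((t+1)/m).

Lemma beta_opt_pos (t m : R) : 1 <= m <= t -> 0 < beta_opt t m.
Proof. intros hm. apply Rdiv_lt_0_compat; [lra|]. apply ln_pos_of_gt1, one_lt_div; lra. Qed.

(** Excess log-loss at a repeated symbol at time T caused by the extra mass
    beta in the denominator:  ln ((T + beta)/T). *)
Definition seen_excess (T m : R) : R := ln (1 + beta_opt T m / T).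

Lemma lnln_increment_lower (T m : R) : 1 <= m -> m <= T ->
  2*(2/(2*T+1)) / (ln (2*T/m) + ln (2*(T+1)/m)) <= lnln (T+1) m - lnln T m.
Proof.
  intros hm hT. unfold lnln.
  set (a := ln (2*T/m)). set (b := ln (2*(T+1)/m)).
  assert (ha : 0 < a) by (apply ln_pos_of_gt1, one_lt_div; lra).
  assert (hba : 2/(2*T+1) <= b - a).
  { unfold a, b. rewrite <- ln_div by (apply Rdiv_lt_0_compat; lra).
    pose proof (ln_ge_first_order (2*(T+1)/m/(2*T/m))) as h.
    replace (2*(T+1)/m/(2*T/m)) with (1 + 1/T) in * by (field; lra).
    assert (0 < 1/T) by (apply Rdiv_lt_0_compat; lra).
    replace ((1 + 1/T - 1)/(1 + 1/T + 1)) with (1/(2*T+1)) in h by (field; lra).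
    assert (2/(2*T+1) = 2*(1/(2*T+1))) by (field; lra). specialize (h ltac:(lra)). lra. }
  assert (0 < 2/(2*T+1)) by (apply Rdiv_lt_0_compat; lra).
  rewrite <- ln_div by lra.
  pose proof (ln_ge_first_order (b/a) (one_le_div b a ha ltac:(lra))) as h.
  replace ((b/a - 1)/(b/a+1)) with ((b-a)/(b+a)) in h by (field; lra).
  apply Rle_trans with (2*((b-a)/(b+a))); [|exact h].
  unfold Rdiv. rewrite (Rplus_comm a b).
  assert (0 < /(b+a)) by (apply Rinv_0_lt_compat; lra). nra.
Qed.

Lemma lnln_increment_contribution (T m S : R) : 1 <= m -> m <= T ->
  ln (2*T/m) + ln (2*(T+1)/m) <= S ->
  6*m/((2*T+1)*S) <= 3/2*m*(lnln (T+1) m - lnln T m).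
Proof.
  intros hm hT hS. pose proof (lnln_increment_lower T m hm hT) as h.
  assert (0 < ln (2*T/m)) by (apply ln_pos_of_gt1, one_lt_div; lra).
  assert (0 < ln (2*(T+1)/m)) by (apply ln_pos_of_gt1, one_lt_div; lra).
  set (s := ln (2*T/m) + ln (2*(T+1)/m)) in *.
  assert (0 < s) by (unfold s; lra).
  apply Rle_trans with (3/2*m*(2*(2/(2*T+1))/s)).
  - replace (3/2*m*(2*(2/(2*T+1))/s)) with (6*m/((2*T+1)*s)) by (field; lra).
    unfold Rdiv. apply Rmult_le_compat_l; [lra|]. apply Rinv_le_contravar; nra.
  - apply Rmult_le_compat_l; lra.
Qed.

Lemma Wpot_increment_lower (T m : R) : 1 <= m -> m + 1 <= T ->
  ln ((T+1)/(T+1-m)) - m/(T+1) <= Wpot (T+1) m - Wpot T m.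
Proof.
  intros hm hT. unfold Wpot. set (k := T - m).
  replace (T + 1 - m) with (k+1) by (unfold k; ring).
  assert (hk : 1 <= k) by (unfold k; lra).
  assert (e : ln ((T+1)/(k+1)) - ln (T/k) = ln (k*(T+1)/((k+1)*T))).
  { rewrite <- ln_div by (apply Rdiv_lt_0_compat; lra). f_equal. field. repeat split; lra. }
  assert (hpos : 0 < k * (T + 1) / ((k + 1) * T)) by (apply Rdiv_lt_0_compat; nra).
  pose proof (ln_ge_1_sub_inv _ hpos) as h.
  replace (/ (k * (T + 1) / ((k + 1) * T))) with ((k+1)*T/(k*(T+1))) in h by (field; lra).
  assert (k * (1 - (k + 1) * T / (k * (T + 1))) = - m/(T+1)) by (unfold k; field; lra).
  assert (k * (1 - (k + 1) * T / (k * (T + 1))) <= k * ln (k * (T + 1) / ((k + 1) * T)))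
    by (apply Rmult_le_compat_l; lra).
  replace ((k + 1) * ln ((T + 1) / (k + 1)) - k * ln (T / k)) with
    (ln ((T + 1) / (k + 1)) + k * (ln ((T+1)/(k+1)) - ln (T/k))) by ring.
  rewrite e. lra.
Qed.

Lemma Wpot_increment_nonneg (T m : R) : 1 <= m -> m + 1 <= T ->
  0 <= Wpot (T+1) m - Wpot T m.
Proof.
  intros hm hT. pose proof (Wpot_increment_lower T m hm hT).
  pose proof (ln_ge_1_sub_inv ((T+1)/(T+1-m)) ltac:(apply Rdiv_lt_0_compat; lra)) as h.
  replace (1 - / ((T+1)/(T+1-m))) with (m/(T+1)) in h by (field; lra). lra.
Qed.

Lemma Wpot_le (n m : R) : 0 < m -> m <= n -> Wpot n m <= m.
Proof.
  intros hm hn. unfold Wpot. destruct (Req_dec n m) as [->|hne].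
  { replace (m - m) with 0 by ring. lra. }
  pose proof (ln_le_sub1 (n/(n-m)) ltac:(apply Rdiv_lt_0_compat; lra)) as h.
  apply Rmult_le_compat_l with (r := n - m) in h; [|lra].
  replace ((n-m)*(n/(n-m) - 1)) with m in h by (field; lra). lra.
Qed.

Lemma seen_step_all_distinct (T : R) : 1 <= T -> seen_excess T T <= Phi (T+1) T - Phi T T.
Proof.
  intros hT. unfold seen_excess, beta_opt. rewrite Phi_time_increment.
  replace (Wpot (T+1) T - Wpot T T) with (ln (T+1)).
  2:{ unfold Wpot. replace (T+1-T) with 1 by ring. replace (T-T) with 0 by ring.
      replace ((T+1)/1) with (T+1) by field. ring. }
  pose proof ln2_bounds as hl2.
  set (L := ln ((T+1)/T)).
  assert (hL : 2/(2*T+1) <= L).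
  { unfold L. pose proof (ln_ge_first_order ((T+1)/T) (one_le_div (T+1) T ltac:(lra) ltac:(lra))) as h.
    replace (((T + 1) / T - 1) / ((T + 1) / T + 1)) with (1/(2*T+1)) in h by (field; lra). lra. }
  assert (0 < 2/(2*T+1)) by (apply Rdiv_lt_0_compat; lra).
  (* the excess is at most ln (T + 3/2) <= ln (T+1) + 1/(2(T+1)) *)
  assert (hexcess : ln (1 + T / L / T) <= ln (T+1) + (1/2)/(T+1)).
  { assert (T / L / T <= T + /2).
    { replace (T/L/T) with (/L) by (field; lra).
      replace (T + /2) with (/ (2/(2*T+1))) by (field; lra).
      apply Rinv_le_contravar; lra. }
    apply Rle_trans with (ln (T + 3/2)).
    { apply ln_le; [|lra]. assert (0 < T/L/T) by (repeat apply Rdiv_lt_0_compat; lra). lra. }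
    replace (T + 3/2) with ((T+1)*(1 + (1/2)/(T+1))) by (field; lra).
    assert (0 <= (1/2)/(T+1)) by (apply Rlt_le, Rdiv_lt_0_compat; lra).
    rewrite ln_mult by lra. pose proof (ln_1p_le ((1/2)/(T+1))). lra. }
  (* the ln ln term gains at least 1/(2(T+1)), since ln 2 + ln 4 <= 2.1 *)
  assert (hsum : ln (2*T/T) + ln (2*(T+1)/T) <= 21/10).
  { replace (2*T/T) with 2 by (field; lra). pose proof ln4_bounds.
    assert (ln (2*(T+1)/T) <= ln 4) by (apply ln_le; [apply Rdiv_lt_0_compat|apply div_le_of_le_mul]; lra).
    lra. }
  pose proof (lnln_increment_contribution T T (21/10) ltac:(lra) ltac:(lra) hsum).
  assert ((1/2)/(T+1) <= 6*T/((2*T+1)*(21/10))).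
  { apply div_le_of_le_mul; [lra|].
    replace (6*T/((2*T+1)*(21/10))*(T+1)) with (60*T*(T+1)/(21*(2*T+1))) by (field; lra).
    apply le_div_of_mul_le; nra. }
  lra.
Qed.

(** Seen step, case (T+1)/m <= 2.2: the W term alone pays for the excess. *)
Lemma seen_step_near (T m : R) : 1 <= m -> m + 1 <= T -> 5*(T+1) <= 11*m ->
  seen_excess T m <= Phi (T+1) m - Phi T m.
Proof.
  intros hm hT hy. unfold seen_excess, beta_opt. rewrite Phi_time_increment.
  pose proof (Wpot_increment_lower T m hm hT) as hW.
  set (L := ln ((T+1)/m)).
  assert (hL : 2*((T+1-m)/(T+1+m)) <= L).
  { unfold L. pose proof (ln_ge_first_order ((T+1)/m) (one_le_div (T+1) m ltac:(lra) ltac:(lra))) as h.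
    replace (((T + 1) / m - 1) / ((T + 1) / m + 1)) with ((T+1-m)/(T+1+m)) in h by (field; lra).
    exact h. }
  assert (hx : 0 < (T+1-m)/(T+1+m)) by (apply Rdiv_lt_0_compat; lra).
  assert (hexcess : ln (1 + m / L / T) <= ln ((T+1)/(T+1-m))).
  { assert (m / L / T <= m * (T+1+m) / (2*T*(T+1-m))).
    { replace (m/L/T) with (m/T * /L) by (field; lra).
      replace (m * (T+1+m) / (2*T*(T+1-m))) with (m/T * / (2*((T+1-m)/(T+1+m)))) by (field; lra).
      apply Rmult_le_compat_l; [apply Rlt_le, Rdiv_lt_0_compat; lra|].
      apply Rinv_le_contravar; lra. }
    assert (1 + m * (T+1+m) / (2*T*(T+1-m)) <= (T+1)/(T+1-m)).
    { apply Rmult_le_reg_r with (2*T*(T+1-m)); [nra|].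
      replace ((1 + m * (T+1+m) / (2*T*(T+1-m))) * (2*T*(T+1-m)))
        with (2*T*(T+1-m) + m*(T+1+m)) by (field; lra).
      replace ((T+1)/(T+1-m) * (2*T*(T+1-m))) with (2*T*(T+1)) by (field; lra). nra. }
    apply ln_le; [|lra]. assert (0 < m/L/T) by (repeat apply Rdiv_lt_0_compat; lra). lra. }
  (* the ln ln term pays for the remaining m/(T+1), since ln(2(T+1)/m) <= ln 4.4 <= 3/2 *)
  assert (hlb : ln (2*(T+1)/m) <= 3/2).
  { apply Rle_trans with (ln (22/5)); [|ln_numeric].
    apply ln_le; [apply Rdiv_lt_0_compat; lra|]. apply div_le_of_le_mul; lra. }
  assert (hla : ln (2*T/m) <= ln (2*(T+1)/m))
    by (apply ln_le; [apply Rdiv_lt_0_compat; lra|]; unfold Rdiv;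
        apply Rmult_le_compat_r; [apply Rlt_le, Rinv_0_lt_compat|]; lra).
  pose proof (lnln_increment_contribution T m 3 hm ltac:(lra) ltac:(lra)).
  assert (m/(T+1) <= 6*m/((2*T+1)*3)).
  { apply div_le_of_le_mul; [lra|].
    replace (6*m/((2*T+1)*3)*(T+1)) with (2*m*(T+1)/(2*T+1)) by (field; lra).
    apply le_div_of_mul_le; nra. }
  lra.
Qed.

(** Seen step, case (T+1)/m >= 7: the ln ln term alone pays for the excess. *)
Lemma seen_step_far (T m : R) : 1 <= m -> 7*m <= T+1 ->
  seen_excess T m <= Phi (T+1) m - Phi T m.
Proof.
  intros hm hy. unfold seen_excess, beta_opt. rewrite Phi_time_increment.
  assert (hT : m + 1 <= T) by lra.
  pose proof (Wpot_increment_nonneg T m hm hT).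
  set (L := ln ((T+1)/m)).
  pose proof ln2_bounds.
  assert (hL7 : 19358/10000 <= L).
  { apply Rle_trans with (ln 7); [ln_numeric|].
    apply ln_le; [lra|]. apply le_div_of_mul_le; lra. }
  assert (hlb : ln (2*(T+1)/m) = ln 2 + L).
  { unfold L. rewrite <- ln_mult by (try apply Rdiv_lt_0_compat; lra). f_equal. field. lra. }
  assert (hla : ln (2*T/m) <= ln (2*(T+1)/m))
    by (apply ln_le; [apply Rdiv_lt_0_compat; lra|]; unfold Rdiv;
        apply Rmult_le_compat_r; [apply Rlt_le, Rinv_0_lt_compat|]; lra).
  pose proof (lnln_increment_contribution T m (2*(ln 2 + L)) hm ltac:(lra) ltac:(lra)).
  assert (hu : 0 <= m / L / T) by (apply Rlt_le; repeat apply Rdiv_lt_0_compat; lra).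
  pose proof (ln_1p_le _ hu).
  assert (m / L / T <= 6*m/((2*T+1)*(2*(ln 2 + L)))).
  { apply Rmult_le_reg_r with (L*T*((2*T+1)*(2*(ln 2 + L)))); [apply Rmult_lt_0_compat; nra|].
    replace (m / L / T * (L*T*((2*T+1)*(2*(ln 2 + L))))) with (m*((2*T+1)*(2*(ln 2 + L))))
      by (field; lra).
    replace (6*m/((2*T+1)*(2*(ln 2 + L))) * (L*T*((2*T+1)*(2*(ln 2 + L))))) with (6*m*L*T)
      by (field; nra).
    assert ((2*T+1)*ln 2 <= (T-1)*L) by nra. nra. }
  lra.
Qed.

(** In the intermediate range 2.2 < (T+1)/m < 7 the seen step is verified
    numerically on boxes y0 <= (T+1)/m <= y1, using three estimates expressed
    through the ratio y = (T+1)/m. *)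
Lemma seen_excess_by_ratio (T m y0 L0 ef : R) :
  1 <= m -> m + 1 <= T -> y0 <= (T+1)/m -> 0 < L0 -> L0 <= ln y0 ->
  1/m <= ef -> ef < y0 ->
  seen_excess T m <= ln (1 + 1/((y0 - ef)*L0)).
Proof.
  intros hm hT hy0 hL0 hL0' hef hefy. unfold seen_excess, beta_opt.
  assert (0 < 1/m) by (apply Rdiv_lt_0_compat; lra).
  set (y := (T+1)/m) in *.
  assert (hLlo : L0 <= ln y) by (apply Rle_trans with (ln y0); [|apply ln_le]; lra).
  assert (hym : y - 1/m = T/m) by (unfold y; field; lra).
  assert (0 < T/m) by (apply Rdiv_lt_0_compat; lra).
  assert (hu : m / ln y / T <= 1/((y0 - ef)*L0)).
  { replace (m / ln y / T) with (1/((y - 1/m) * ln y)) by (rewrite hym; field; repeat split; lra).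
    unfold Rdiv. rewrite !Rmult_1_l. apply Rinv_le_contravar; [apply Rmult_lt_0_compat; lra|].
    apply Rmult_le_compat; lra. }
  apply ln_le; [|lra]. assert (0 < m / ln y / T) by (repeat apply Rdiv_lt_0_compat; lra). lra.
Qed.

Lemma Wpot_increment_by_ratio (T m y1 : R) :
  1 <= m -> m + 1 <= T -> (T+1)/m <= y1 ->
  1/(y1*(2*y1-1)) + 2/3*(1/(2*y1-1))^3 <= Wpot (T+1) m - Wpot T m.
Proof.
  intros hm hT hy1. pose proof (Wpot_increment_lower T m hm hT) as hW.
  set (y := (T+1)/m) in *.
  assert (hy : 1 < y) by (apply one_lt_div; lra).
  replace ((T+1)/(T+1-m)) with (y/(y-1)) in hW by (unfold y; field; split; lra).
  replace (m/(T+1)) with (1/y) in hW by (unfold y; field; split; lra).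
  pose proof (ln_ge_lower_poly (y/(y-1)) ltac:(apply one_le_div; lra)) as hl.
  unfold ln_lower_poly in hl. cbv zeta in hl.
  replace ((y/(y-1) - 1)/(y/(y-1) + 1)) with (1/(2*y-1)) in hl by (field; split; lra).
  assert (2*(1/(2*y-1)) + 2*(1/(2*y-1))^3/3 - 1/y = 1/(y*(2*y-1)) + 2/3*(1/(2*y-1))^3)
    by (field; split; lra).
  assert (1/(y1*(2*y1-1)) <= 1/(y*(2*y-1)))
    by (unfold Rdiv; rewrite !Rmult_1_l; apply Rinv_le_contravar; nra).
  assert ((1/(2*y1-1))^3 <= (1/(2*y-1))^3).
  { apply pow_incr. split; [apply Rlt_le, Rdiv_lt_0_compat; lra|].
    unfold Rdiv. rewrite !Rmult_1_l. apply Rinv_le_contravar; lra. }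
  lra.
Qed.

Lemma lnln_increment_by_ratio (T m y1 L1 el : R) :
  1 <= m -> m + 1 <= T -> (T+1)/m <= y1 -> ln y1 <= L1 -> 0 <= el <= 1/m ->
  3/((2*y1 - el)*(6933/10000 + L1)) <= 3/2*m*(lnln (T+1) m - lnln T m).
Proof.
  intros hm hT hy1 hL1 hel.
  set (y := (T+1)/m) in *.
  assert (hy : 1 < y) by (apply one_lt_div; lra).
  assert (hLhi : ln y <= L1) by (apply Rle_trans with (ln y1); [apply ln_le|]; lra).
  pose proof ln2_bounds.
  assert (hlb : ln (2*(T+1)/m) = ln 2 + ln y).
  { unfold y. rewrite <- ln_mult by (try apply Rdiv_lt_0_compat; lra). f_equal. field. lra. }
  assert (hla : ln (2*T/m) <= ln (2*(T+1)/m))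
    by (apply ln_le; [apply Rdiv_lt_0_compat; lra|]; unfold Rdiv;
        apply Rmult_le_compat_r; [apply Rlt_le, Rinv_0_lt_compat|]; lra).
  assert (0 < ln y) by (apply ln_pos_of_gt1; lra).
  pose proof (lnln_increment_contribution T m (2*(6933/10000 + L1)) hm ltac:(lra) ltac:(lra)).
  assert (1/m <= 1) by (apply div_le_1; lra).
  replace (6*m/((2*T+1)*(2*(6933/10000 + L1)))) with (3/((2*y - 1/m)*(6933/10000 + L1))) in *
    by (unfold y; field; repeat split; lra).
  apply Rle_trans with (3/((2*y - 1/m)*(6933/10000 + L1))); [|lra].
  unfold Rdiv. apply Rmult_le_compat_l; [lra|]. apply Rinv_le_contravar.
  - apply Rmult_lt_0_compat; lra.
  - apply Rmult_le_compat_r; lra.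
Qed.

Lemma seen_step_box (T m y0 y1 L0 L1 ef el : R) :
  1 <= m -> m + 1 <= T -> y0 <= (T+1)/m <= y1 ->
  0 < L0 -> L0 <= ln y0 -> ln y1 <= L1 ->
  0 <= el <= 1/m -> 1/m <= ef < y0 ->
  ln (1 + 1/((y0 - ef)*L0))
    <= 1/(y1*(2*y1-1)) + 2/3*(1/(2*y1-1))^3 + 3/((2*y1 - el)*(6933/10000 + L1)) ->
  seen_excess T m <= Phi (T+1) m - Phi T m.
Proof.
  intros hm hT hy hL0 hL0' hL1 hel hef hnum. rewrite Phi_time_increment.
  pose proof (seen_excess_by_ratio T m y0 L0 ef hm hT ltac:(lra) hL0 hL0' ltac:(lra) ltac:(lra)).
  pose proof (Wpot_increment_by_ratio T m y1 hm hT ltac:(lra)).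
  pose proof (lnln_increment_by_ratio T m y1 L1 el hm hT ltac:(lra) hL1 hel).
  lra.
Qed.

Ltac close_box := try lra; ln_numeric.

Lemma seen_step_mid_one (T : R) : T = 2 \/ T = 3 \/ T = 4 \/ T = 5 ->
  seen_excess T 1 <= Phi (T+1) 1 - Phi T 1.
Proof.
  intros [ -> | [ -> | [ -> | -> ]]].
  - apply (seen_step_box 2 1 3 3 (5491/5000) (10989/10000) 1 1); close_box.
  - apply (seen_step_box 3 1 4 4 (6929/5000) (6933/5000) 1 1); close_box.
  - apply (seen_step_box 4 1 5 5 (16089/10000) (8049/5000) 1 1); close_box.
  - apply (seen_step_box 5 1 6 6 (17911/10000) (8961/5000) 1 1); close_box.
Qed.

Lemma seen_step_mid_two (T : R) :
  T = 4 \/ T = 5 \/ T = 6 \/ T = 7 \/ T = 8 \/ T = 9 \/ T = 10 \/ T = 11 \/ T = 12 ->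
  seen_excess T 2 <= Phi (T+1) 2 - Phi T 2.
Proof.
  intros [ -> | [ -> | [ -> | [ -> | [ -> | [ -> | [ -> | [ -> | -> ]]]]]]]].
  - apply (seen_step_box 4 2 (5/2) (5/2) (229/250) (1833/2000) (1/2) (1/2)); close_box.
  - apply (seen_step_box 5 2 3 3 (5491/5000) (10989/10000) (1/2) (1/2)); close_box.
  - apply (seen_step_box 6 2 (7/2) (7/2) (6259/5000) (6267/5000) (1/2) (1/2)); close_box.
  - apply (seen_step_box 7 2 4 4 (6929/5000) (6933/5000) (1/2) (1/2)); close_box.
  - apply (seen_step_box 8 2 (9/2) (9/2) (3007/2000) (3761/2500) (1/2) (1/2)); close_box.
  - apply (seen_step_box 9 2 5 5 (16089/10000) (8049/5000) (1/2) (1/2)); close_box.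
  - apply (seen_step_box 10 2 (11/2) (11/2) (8521/5000) (17051/10000) (1/2) (1/2)); close_box.
  - apply (seen_step_box 11 2 6 6 (17911/10000) (8961/5000) (1/2) (1/2)); close_box.
  - apply (seen_step_box 12 2 (13/2) (13/2) (18709/10000) (4681/2500) (1/2) (1/2)); close_box.
Qed.

Lemma seen_step_mid_many (T m : R) : 3 <= m -> m + 1 <= T ->
  11*m < 5*(T+1) -> T+1 < 7*m -> seen_excess T m <= Phi (T+1) m - Phi T m.
Proof.
  intros hm hT h1 h2.
  assert (22/10 <= (T+1)/m) by (apply le_div_of_mul_le; lra).
  assert ((T+1)/m <= 7) by (apply div_le_of_le_mul; lra).
  assert (1/m <= 1/3) by (unfold Rdiv; rewrite !Rmult_1_l; apply Rinv_le_contravar; lra).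
  assert (0 <= 1/m) by (apply Rlt_le, Rdiv_lt_0_compat; lra).
  apply (split_at _ ((T+1)/m) (12/5)); intro.
  { apply (seen_step_box T m (11/5) (12/5) (3941/5000) (8757/10000) (1/3) 0); close_box. }
  apply (split_at _ ((T+1)/m) (263/100)); intro.
  { apply (seen_step_box T m (12/5) (263/100) (547/625) (1209/1250) (1/3) 0); close_box. }
  apply (split_at _ ((T+1)/m) (29/10)); intro.
  { apply (seen_step_box T m (263/100) (29/10) (9667/10000) (213/200) (1/3) 0); close_box. }
  apply (split_at _ ((T+1)/m) (321/100)); intro.
  { apply (seen_step_box T m (29/10) (321/100) (10643/10000) (11667/10000) (1/3) 0); close_box. }
  apply (split_at _ ((T+1)/m) (357/100)); intro.
  { apply (seen_step_box T m (321/100) (357/100) (11657/10000) (12733/10000) (1/3) 0); close_box. }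
  apply (split_at _ ((T+1)/m) 4); intro.
  { apply (seen_step_box T m (357/100) 4 (2543/2000) (6933/5000) (1/3) 0); close_box. }
  apply (split_at _ ((T+1)/m) (451/100)); intro.
  { apply (seen_step_box T m 4 (451/100) (6929/5000) (15067/10000) (1/3) 0); close_box. }
  apply (split_at _ ((T+1)/m) (128/25)); intro.
  { apply (seen_step_box T m (451/100) (128/25) (7529/5000) (3267/2000) (1/3) 0); close_box. }
  apply (split_at _ ((T+1)/m) (293/50)); intro.
  { apply (seen_step_box T m (128/25) (293/50) (8163/5000) (8843/5000) (1/3) 0); close_box. }
  apply (split_at _ ((T+1)/m) (27/4)); intro.
  { apply (seen_step_box T m (293/50) (27/4) (707/400) (9551/5000) (1/3) 0); close_box. }
  apply (seen_step_box T m (27/4) 7 (3817/2000) (19467/10000) (1/3) 0); close_box.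
Qed.

Lemma seen_step (T m : nat) : (1 <= m)%nat -> (m <= T)%nat ->
  seen_excess (INR T) (INR m) <= Phi (INR T + 1) (INR m) - Phi (INR T) (INR m).
Proof.
  intros hm hT.
  assert (Hm : 1 <= INR m) by (apply (le_INR 1); lia).
  destruct (Nat.eq_dec m T) as [<-|hne]; [apply seen_step_all_distinct; lra|].
  assert (HT : INR m + 1 <= INR T) by (rewrite <- S_INR; apply le_INR; lia).
  destruct (le_lt_dec (5*(T+1)) (11*m)) as [h1|h1].
  { apply seen_step_near; try lra.
    apply le_INR in h1. rewrite !mult_INR, plus_INR in h1. simpl in h1. lra. }
  destruct (le_lt_dec (7*m) (T+1)) as [h2|h2].
  { apply seen_step_far; try lra.
    apply le_INR in h2. rewrite mult_INR, plus_INR in h2. simpl in h2. lra. }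
  destruct (Nat.eq_dec m 1) as [->|hm1].
  { apply seen_step_mid_one.
    assert (T = 2 \/ T = 3 \/ T = 4 \/ T = 5)%nat as HH by lia.
    destruct HH as [ -> | [ -> | [ -> | -> ]]]; simpl; lra. }
  destruct (Nat.eq_dec m 2) as [->|hm2].
  { apply seen_step_mid_two.
    assert (T = 4 \/ T = 5 \/ T = 6 \/ T = 7 \/ T = 8 \/ T = 9 \/ T = 10 \/ T = 11 \/ T = 12)%nat
      as HH by lia.
    destruct HH as [ -> | [ -> | [ -> | [ -> | [ -> | [ -> | [ -> | [ -> | -> ]]]]]]]]; simpl; lra. }
  apply lt_INR in h1. rewrite !mult_INR, plus_INR in h1.
  apply lt_INR in h2. rewrite mult_INR, plus_INR in h2. simpl in h1, h2.
  apply seen_step_mid_many; try lra.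
  replace 3 with (INR 3) by (simpl; lra). apply le_INR; lia.
Qed.

(** The numerical heart is the one-variable inequality
      ln (Q+1) + (3/2)(1 - 1/rho)/Q - (3/2) ln Q <= 73/60,   Q = ln (2 rho),
    for rho >= 1, checked on boxes for rho <= 3.1 and by a crude bound beyond. *)
Definition new_symbol_slack (rho : R) : R :=
  ln (ln (2*rho) + 1) + 3/2*(1 - 1/rho)/ln (2*rho) - 3/2*ln (ln (2*rho)).

Lemma new_symbol_slack_box (rho r0 r1 Q0 Q1 A B : R) :
  1 <= r0 <= rho -> rho <= r1 -> 0 < Q0 ->
  Q0 <= ln (2*r0) -> ln (2*r1) <= Q1 -> ln (Q1+1) <= A -> B <= ln Q0 ->
  A + 3/2*(1 - 1/r1)/Q0 - 3/2*B <= 73/60 -> new_symbol_slack rho <= 73/60.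
Proof.
  intros h0 h1 hQ0 hQ0' hQ1 hA hB hnum. unfold new_symbol_slack.
  set (Q := ln (2*rho)).
  assert (Q0 <= Q) by (unfold Q; apply Rle_trans with (ln (2*r0)); [|apply ln_le]; lra).
  assert (Q <= Q1) by (unfold Q; apply Rle_trans with (ln (2*r1)); [apply ln_le|]; lra).
  assert (ln (Q+1) <= A) by (apply Rle_trans with (ln (Q1+1)); [apply ln_le|]; lra).
  assert (B <= ln Q) by (apply Rle_trans with (ln Q0); [|apply ln_le]; lra).
  assert ((1 - 1/rho)/Q <= (1 - 1/r1)/Q0).
  { assert (1/rho <= 1) by (apply div_le_1; lra).
    assert (1/r1 <= 1/rho) by (unfold Rdiv; rewrite !Rmult_1_l; apply Rinv_le_contravar; lra).
    apply Rle_trans with ((1-1/r1)/Q).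
    - unfold Rdiv at 1 3. apply Rmult_le_compat_r; [left; apply Rinv_0_lt_compat|]; lra.
    - unfold Rdiv at 1 3. apply Rmult_le_compat_l; [|apply Rinv_le_contravar]; lra. }
  replace (3/2*(1-1/rho)/Q) with (3/2*((1-1/rho)/Q)) by (field; lra).
  replace (3/2*(1-1/r1)/Q0) with (3/2*((1-1/r1)/Q0)) in hnum by (field; lra).
  lra.
Qed.

Lemma new_symbol_slack_tail (rho : R) : 31/10 <= rho -> new_symbol_slack rho <= 73/60.
Proof.
  intros h. unfold new_symbol_slack. set (Q := ln (2*rho)).
  assert (hQ : 18/10 <= Q) by (unfold Q; apply Rle_trans with (ln (62/10)); [ln_numeric|apply ln_le; lra]).
  assert (h1 : ln (Q+1) - ln Q <= 1/Q).
  { rewrite <- ln_div by lra. replace ((Q+1)/Q) with (1 + 1/Q) by (field; lra).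
    apply ln_1p_le. apply Rlt_le, Rdiv_lt_0_compat; lra. }
  assert (h2 : 58/100 <= ln Q) by (apply Rle_trans with (ln (18/10)); [ln_numeric|apply ln_le; lra]).
  assert (3/2*(1 - 1/rho)/Q <= 3/2/Q).
  { unfold Rdiv. apply Rmult_le_compat_r; [apply Rlt_le, Rinv_0_lt_compat; lra|].
    assert (0 < 1 * /rho) by (rewrite Rmult_1_l; apply Rinv_0_lt_compat; lra). lra. }
  assert (1/Q + 3/2/Q <= 25/18).
  { replace (1/Q + 3/2/Q) with (5/2 * /Q) by (field; lra).
    assert (/Q <= /(18/10)) by (apply Rinv_le_contravar; lra). lra. }
  lra.
Qed.

Ltac slack_box r0 r1 Q0 Q1 A B :=
  apply (new_symbol_slack_box _ r0 r1 Q0 Q1 A B); close_box.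

Lemma new_symbol_slack_le (rho : R) : 1 <= rho -> new_symbol_slack rho <= 73/60.
Proof.
  intros h.
  apply (split_at _ rho (21/20)); intro.
  { slack_box 1 (21/20) (6929/10000) (7421/10000) (1389/2500) (-367/1000). }
  apply (split_at _ rho (11/10)); intro.
  { slack_box (21/20) (11/10) (927/1250) (7887/10000) (5821/10000) (-299/1000). }
  apply (split_at _ rho (23/20)); intro.
  { slack_box (11/10) (23/20) (3941/5000) (8331/10000) (6067/10000) (-2381/10000). }
  apply (split_at _ rho (6/5)); intro.
  { slack_box (23/20) (6/5) (4163/5000) (8757/10000) (3149/5000) (-1833/10000). }
  apply (split_at _ rho (63/50)); intro.
  { slack_box (6/5) (63/50) (547/625) (1849/2000) (6557/10000) (-667/5000). }
  apply (split_at _ rho (133/100)); intro.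
  { slack_box (63/50) (133/100) (231/250) (1957/2000) (1709/2500) (-791/10000). }
  apply (split_at _ rho (143/100)); intro.
  { slack_box (133/100) (143/100) (489/500) (10511/10000) (3593/5000) (-223/10000). }
  apply (split_at _ rho (79/50)); intro.
  { slack_box (143/100) (79/50) (2101/2000) (11509/10000) (7661/10000) (123/2500). }
  apply (split_at _ rho (183/100)); intro.
  { slack_box (79/50) (183/100) (23/20) (12983/10000) (2081/2500) (1397/10000). }
  apply (split_at _ rho (59/25)); intro.
  { slack_box (183/100) (59/25) (6481/5000) (7761/5000) (2343/2500) (1297/5000). }
  apply (split_at _ rho (31/10)); intro.
  { slack_box (59/25) (31/10) (15513/10000) (73/40) (2597/2500) (1097/2500). }
  apply new_symbol_slack_tail; lra.
Qed.

Lemma Wpot_new_increment_nonneg (T m : R) : 1 <= m -> m <= T ->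
  0 <= Wpot (T+1) (m+1) - Wpot T m.
Proof.
  intros hm hT. unfold Wpot. replace (T+1-(m+1)) with (T-m) by ring.
  destruct (Req_dec T m) as [->|hne]; [replace (m-m) with 0 by ring; lra|].
  rewrite <- Rmult_minus_distr_l. apply Rmult_le_pos; [lra|].
  assert (ln (T/(T-m)) <= ln ((T+1)/(T-m))).
  { apply ln_le; [apply Rdiv_lt_0_compat; lra|]. unfold Rdiv.
    apply Rmult_le_compat_r; [apply Rlt_le, Rinv_0_lt_compat|]; lra. }
  lra.
Qed.

Lemma mlnm_increment (m : R) : 1 <= m ->
  - ln m - 1 <= -(m+1-1)*ln (m+1) + (m-1)*ln m.
Proof.
  intros hm.
  assert (m*(ln (m+1) - ln m) <= 1).
  { rewrite <- ln_div by lra. replace ((m+1)/m) with (1 + 1/m) by (field; lra).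
    pose proof (ln_1p_le (1/m) ltac:(apply Rlt_le, Rdiv_lt_0_compat; lra)) as h.
    apply Rmult_le_compat_l with (r := m) in h; [|lra].
    replace (m*(1/m)) with 1 in h by (field; lra). lra. }
  lra.
Qed.

Lemma lnln_new_increment (T m : R) : 1 <= m -> m <= T ->
  let rho := (T+1)/(m+1) in
  m*(lnln T m - lnln (T+1) (m+1)) <= (1 - 1/rho)/ln (2*rho).
Proof.
  intros hm hT rho. unfold lnln.
  set (P := ln (2*T/m)). set (Q := ln (2*rho)).
  assert (hP : 0 < P) by (apply ln_pos_of_gt1, one_lt_div; lra).
  assert (hrho : 1 <= rho) by (apply one_le_div; lra).
  assert (hQ : 0 < Q) by (apply ln_pos_of_gt1; lra).
  replace (2*(T+1)/(m+1)) with (2*rho) by (unfold rho; field; lra). fold Q.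
  assert (hPQ : P - Q <= (T-m)/(m*(T+1))).
  { assert (0 < 2*T/m) by (apply Rdiv_lt_0_compat; lra).
    assert (0 < 2*rho) by lra.
    unfold P, Q. rewrite <- ln_div by lra.
    pose proof (ln_le_sub1 (2*T/m/(2*rho)) ltac:(apply Rdiv_lt_0_compat; lra)) as h.
    replace (2*T/m/(2*rho) - 1) with ((T-m)/(m*(T+1))) in h by (unfold rho; field; lra).
    exact h. }
  assert (hPQ' : ln P - ln Q <= P/Q - 1)
    by (rewrite <- ln_div by lra; apply ln_le_sub1, Rdiv_lt_0_compat; lra).
  replace (1 - 1/rho) with (m * ((T-m)/(m*(T+1)))) by (unfold rho; field; lra).
  apply Rle_trans with (m*(P/Q-1)); [apply Rmult_le_compat_l; lra|].
  replace (m*(P/Q-1)) with (m*(P-Q)/Q) by (field; lra).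
  unfold Rdiv at 1 3. apply Rmult_le_compat_r; [apply Rlt_le, Rinv_0_lt_compat; lra|].
  apply Rmult_le_compat_l; lra.
Qed.

(** New step: at a new symbol the log-loss excess (over ln (1/w), charged to the
    code length CL) is ln (L/m + 1/T) with L = ln((T+1)/m); the potential plus
    a constant 11/12 pays for it. *)
Lemma new_step (T m : R) : 1 <= m -> m <= T ->
  ln (ln ((T+1)/m)/m + 1/T) <= 11/12 + Phi (T+1) (m+1) - Phi T m.
Proof.
  intros hm hT.
  set (L := ln ((T+1)/m)).
  assert (hL : 0 < L) by (apply ln_pos_of_gt1, one_lt_div; lra).
  set (rho := (T+1)/(m+1)).
  assert (hrho : 1 <= rho) by (apply one_le_div; lra).
  set (Q := ln (2*rho)).
  assert (hQ : 0 < Q) by (apply ln_pos_of_gt1; lra).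
  assert (eQ : lnln (T+1) (m+1) = ln Q) by (unfold lnln, Q, rho; do 2 f_equal; field; lra).
  assert (han : ln (L/m + 1/T) = ln (L + m/T) - ln m).
  { assert (0 < m/T) by (apply Rdiv_lt_0_compat; lra).
    rewrite <- ln_div by lra. f_equal. field. split; lra. }
  assert (hexcess : ln (L + m/T) <= ln (Q + 1)).
  { assert (L <= Q).
    { apply ln_le; [apply Rdiv_lt_0_compat; lra|]. unfold rho.
      apply div_le_of_le_mul; [lra|].
      replace (2*((T+1)/(m+1))*m) with (2*m*(T+1)/(m+1)) by (field; lra).
      apply le_div_of_mul_le; nra. }
    assert (0 < m/T <= 1) by (split; [apply Rdiv_lt_0_compat|apply div_le_1]; lra).
    apply ln_le; lra. }
  pose proof (Wpot_new_increment_nonneg T m hm hT).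
  pose proof (mlnm_increment m hm).
  pose proof (lnln_new_increment T m hm hT) as hlnln. cbv zeta in hlnln. fold rho Q in hlnln.
  pose proof (new_symbol_slack_le rho hrho) as hslack.
  unfold new_symbol_slack in hslack. fold Q in hslack.
  replace (3/2*(1-1/rho)/Q) with (3/2*((1-1/rho)/Q)) in hslack by (field; lra).
  rewrite han. unfold Phi. rewrite eQ in *. lra.
Qed.

Lemma stirling_step_upper (k : R) : 0 < k ->
  (k + /2) * ln (1 + 1/k) <= 1 + 1/(12*k*(k+1)).
Proof.
  intros hk. assert (0 < 1/k) by (apply Rdiv_lt_0_compat; lra).
  pose proof (ln_le_upper_poly (1+1/k) ltac:(lra)) as h.
  unfold ln_upper_poly in h. cbv zeta in h.
  replace ((1 + 1/k - 1)/(1 + 1/k + 1)) with (1/(2*k+1)) in h by (field; lra).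
  apply Rle_trans with ((k + /2) * (2*(1/(2*k+1)) + 2*(1/(2*k+1))^3/(3*(1 - (1/(2*k+1))^2)))).
  - apply Rmult_le_compat_l; lra.
  - right. field. repeat split; try lra; nra.
Qed.

Lemma stirling_step_lower (k : R) : 0 < k -> 1 <= (k + /2) * ln (1 + 1/k).
Proof.
  intros hk. assert (0 < 1/k) by (apply Rdiv_lt_0_compat; lra).
  pose proof (ln_ge_lower_poly (1+1/k) ltac:(lra)) as h.
  unfold ln_lower_poly in h. cbv zeta in h.
  replace ((1 + 1/k - 1)/(1 + 1/k + 1)) with (1/(2*k+1)) in h by (field; lra).
  apply Rle_trans with ((k + /2) * (2*(1/(2*k+1)) + 2*(1/(2*k+1))^3/3)).
  - replace ((k + /2) * (2*(1/(2*k+1)) + 2*(1/(2*k+1))^3/3))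
      with (1 + 1/(3*(2*k+1)^2)) by (field; lra).
    assert (0 <= 1/(3*(2*k+1)^2)) by (apply Rlt_le, Rdiv_lt_0_compat; nra). lra.
  - apply Rmult_le_compat_l; lra.
Qed.

Lemma ln_succ_sub (k : R) : 0 < k -> ln (k+1) - ln k = ln (1 + 1/k).
Proof. intros hk. rewrite <- ln_div by lra. f_equal. field. lra. Qed.

(** The maximum-likelihood term ln (n^-n prod n_j^n_j) is a difference of sums
    of x ln x; each count k and the time t carry a potential:
      count_potential k = k + (ln k)/2 - 1/(12k),  time_potential t = -t - (ln t)/2 + 1. *)
Definition xlnx (k : nat) : R := INR k * ln (INR k).
Definition count_potential (k : nat) : R := INR k + ln (INR k)/2 - 1/(12*INR k).
Definition time_potential (t : nat) : R := - INR t - ln (INR t)/2 + 1.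

Lemma xlnx_succ (k : nat) : (1 <= k)%nat ->
  xlnx (S k) - xlnx k = (INR k + 1) * ln (1 + 1/INR k) + ln (INR k).
Proof.
  intros hk. assert (1 <= INR k) by (apply (le_INR 1); lia).
  unfold xlnx. rewrite S_INR, <- ln_succ_sub by lra. ring.
Qed.

Lemma count_potential_step (k : nat) : (1 <= k)%nat ->
  xlnx (S k) - xlnx k - ln (INR k) <= count_potential (S k) - count_potential k.
Proof.
  intros hk. assert (1 <= INR k) by (apply (le_INR 1); lia).
  rewrite xlnx_succ by exact hk. unfold count_potential. rewrite S_INR.
  pose proof (ln_succ_sub (INR k) ltac:(lra)).
  replace (ln (INR k + 1)) with (ln (INR k) + ln (1 + 1/INR k)) by lra.
  pose proof (stirling_step_upper (INR k) ltac:(lra)).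
  replace (INR k + 1 + (ln (INR k) + ln (1 + 1/INR k))/2 - 1/(12*(INR k + 1))
           - (INR k + ln (INR k)/2 - 1/(12*INR k)))
    with (1 + ln (1 + 1/INR k)/2 + 1/(12*INR k*(INR k + 1))) by (field; lra).
  lra.
Qed.

Lemma time_potential_succ (t : nat) : (1 <= t)%nat ->
  time_potential (S t) - time_potential t = -1 - ln (1 + 1/INR t)/2.
Proof.
  intros ht. assert (1 <= INR t) by (apply (le_INR 1); lia).
  unfold time_potential. rewrite S_INR.
  rewrite <- (ln_succ_sub (INR t)) by lra. field.
Qed.

(** The time potential absorbs the -(t+1) ln (1 + 1/t) of the xlnx increment. *)
Lemma time_ln_step_lower (t : nat) : (1 <= t)%nat ->
  -(INR t + 1) * ln (1 + 1/INR t) <= time_potential (S t) - time_potential t.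
Proof.
  intros ht. assert (1 <= INR t) by (apply (le_INR 1); lia).
  rewrite time_potential_succ by exact ht.
  pose proof (stirling_step_lower (INR t) ltac:(lra)). lra.
Qed.

(** Per-step bound at a symbol already seen k >= 1 times at time t: the increase
    of the maximum-likelihood term minus ln S(x_{t+1} | x_{1:t}) is paid by the
    increase of the potentials. *)
Lemma seen_symbol_step (k t m : nat) : (1 <= k)%nat -> (1 <= m)%nat -> (m <= t)%nat ->
  let beta := beta_opt (INR t) (INR m) in
  (xlnx (S k) - xlnx k) - (xlnx (S t) - xlnx t) - ln (INR k / (INR t + beta))
  <= (count_potential (S k) - count_potential k) + (time_potential (S t) - time_potential t)
     + (Phi (INR t + 1) (INR m) - Phi (INR t) (INR m)).
Proof.
  intros hk hm hmt beta.
  assert (1 <= INR t) by (apply (le_INR 1); lia).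
  assert (1 <= INR m <= INR t) by (split; [apply (le_INR 1)|apply le_INR]; lia).
  assert (1 <= INR k) by (apply (le_INR 1); lia).
  assert (0 < beta) by (apply beta_opt_pos; lra).
  pose proof (count_potential_step k hk).
  pose proof (time_ln_step_lower t ltac:(lia)).
  pose proof (seen_step t m hm hmt) as hseen.
  assert (seen_excess (INR t) (INR m) = ln (INR t + beta) - ln (INR t)) as e.
  { unfold seen_excess. fold beta. rewrite <- ln_div by lra. f_equal. field. lra. }
  rewrite (xlnx_succ t) by lia. rewrite ln_div by lra. lra.
Qed.

(** Per-step bound at a new symbol, whose weight w is charged to the code length. *)
Lemma new_symbol_step (t m : nat) (w : R) : (1 <= m)%nat -> (m <= t)%nat -> 0 < w ->
  let beta := beta_opt (INR t) (INR m) in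
  - (xlnx (S t) - xlnx t) - ln (beta * w / (INR t + beta)) - ln (/ w)
  <= count_potential 1 + (time_potential (S t) - time_potential t)
     + (Phi (INR t + 1) (INR m + 1) - Phi (INR t) (INR m)).
Proof.
  intros hm hmt hw beta.
  assert (1 <= INR t) by (apply (le_INR 1); lia).
  assert (1 <= INR m <= INR t) by (split; [apply (le_INR 1)|apply le_INR]; lia).
  assert (0 < ln ((INR t + 1)/INR m)) by (apply ln_pos_of_gt1, one_lt_div; lra).
  assert (0 < beta) by (apply beta_opt_pos; lra).
  assert (count_potential 1 = 11/12) by (unfold count_potential; simpl; rewrite ln_1; field).
  pose proof (time_ln_step_lower t ltac:(lia)).
  pose proof (new_step (INR t) (INR m) ltac:(lra) ltac:(lra)) as hnew.
  replace (ln ((INR t + 1)/INR m)/INR m + 1/INR t) with ((INR t + beta)/(INR t * beta)) in hnew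
    by (unfold beta, beta_opt; field; repeat split; lra).
  rewrite xlnx_succ by lia.
  assert (0 < beta * w) by (apply Rmult_lt_0_compat; lra).
  assert (0 < INR t * beta) by (apply Rmult_lt_0_compat; lra).
  rewrite ln_div, ln_mult in hnew by lra.
  rewrite ln_div, ln_mult, ln_Rinv by lra.
  lra.
Qed.

Definition sum_over {X : Type} (F : X -> R) (l : list X) : R :=
  fold_right (fun j acc => F j + acc) 0 l.

Lemma sum_over_perm {X : Type} (F : X -> R) (l1 l2 : list X) :
  Permutation l1 l2 -> sum_over F l1 = sum_over F l2.
Proof. induction 1; simpl; lra. Qed.

Lemma sum_over_ext_in {X : Type} (F G : X -> R) (l : list X) :
  (forall x, In x l -> F x = G x) -> sum_over F l = sum_over G l.
Proof.
  induction l as [|a l IH]; simpl; intros h; [lra|].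
  rewrite h, IH by auto. lra.
Qed.

Lemma sum_over_le {X : Type} (F G : X -> R) (l : list X) :
  (forall x, In x l -> F x <= G x) -> sum_over F l <= sum_over G l.
Proof.
  induction l as [|a l IH]; simpl; intros h; [lra|].
  pose proof (h a (or_introl eq_refl)). pose proof (IH (fun x hx => h x (or_intror hx))). lra.
Qed.

Lemma sum_over_plus {X : Type} (F G : X -> R) (l : list X) :
  sum_over (fun x => F x + G x) l = sum_over F l + sum_over G l.
Proof. induction l as [|a l IH]; simpl; [lra|]. rewrite IH. lra. Qed.

Lemma sum_over_update {X : Type} (F G : X -> R) (l : list X) (a : X) :
  NoDup l -> In a l -> (forall x, x <> a -> G x = F x) ->
  sum_over G l = sum_over F l + G a - F a.
Proof.
  induction l as [|b l IH]; simpl; intros hnd hin h; [contradiction|].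
  inversion hnd; subst.
  destruct hin as [<-|hin].
  - rewrite (sum_over_ext_in G F l); [lra|]. intros x hx. apply h. intro; subst; contradiction.
  - assert (b <> a) by (intro; subst; contradiction).
    rewrite h, IH by auto. lra.
Qed.

Lemma ln_prod_powers {X : Type} (c : X -> nat) (l : list X) :
  (forall j, In j l -> (1 <= c j)%nat) ->
  0 < fold_right (fun j acc => INR (c j) ^ (c j) * acc) 1 l /\
  ln (fold_right (fun j acc => INR (c j) ^ (c j) * acc) 1 l)
    = sum_over (fun j => INR (c j) * ln (INR (c j))) l.
Proof.
  induction l as [|a l IH]; intros h; simpl.
  - split; [lra|apply ln_1].
  - destruct IH as [h1 h2]; [intros; apply h; simpl; auto|].
    assert (1 <= INR (c a)) by (apply (le_INR 1); apply h; simpl; auto).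
    assert (0 < INR (c a) ^ c a) by (apply pow_lt; lra).
    split; [apply Rmult_lt_0_compat; lra|].
    rewrite ln_mult, ln_pow, h2 by lra. reflexivity.
Qed.

Section Counts.
Variable X : Type.
Variable eq_dec : forall a b : X, {a = b} + {a <> b}.

Lemma cnt_snoc (p : list X) (a j : X) :
  cnt X eq_dec (p ++ [a]) j = (cnt X eq_dec p j + (if eq_dec a j then 1 else 0))%nat.
Proof. unfold cnt. rewrite count_occ_app. simpl. destruct (eq_dec a j); lia. Qed.

Lemma cnt_pos_iff_In (p : list X) (a : X) : In a p <-> (0 < cnt X eq_dec p a)%nat.
Proof. unfold cnt. apply count_occ_In. Qed.

Lemma cnt_not_In (p : list X) (a : X) : ~ In a p -> cnt X eq_dec p a = 0%nat.
Proof. intros h. unfold cnt. apply count_occ_not_In, h. Qed.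

Lemma nodup_snoc_perm (p : list X) (a : X) :
  Permutation (nodup eq_dec (p ++ [a]))
    (if in_dec eq_dec a p then nodup eq_dec p else a :: nodup eq_dec p).
Proof.
  apply NoDup_Permutation; [apply NoDup_nodup| |].
  - destruct (in_dec eq_dec a p); [apply NoDup_nodup|].
    constructor; [rewrite nodup_In; auto|apply NoDup_nodup].
  - intro x. rewrite nodup_In, in_app_iff. simpl.
    destruct (in_dec eq_dec a p); simpl; rewrite ?nodup_In; intuition; subst; auto.
Qed.

Lemma mdist_snoc (p : list X) (a : X) :
  mdist X eq_dec (p ++ [a]) = (mdist X eq_dec p + (if in_dec eq_dec a p then 0 else 1))%nat.
Proof.
  unfold mdist. rewrite (Permutation_length (nodup_snoc_perm p a)).
  destruct (in_dec eq_dec a p); simpl; lia.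
Qed.

Lemma mdist_pos (l : list X) : l <> [] -> (1 <= mdist X eq_dec l)%nat.
Proof.
  intros h. destruct l as [|a l]; [congruence|]. unfold mdist.
  assert (In a (nodup eq_dec (a :: l))) by (apply nodup_In; simpl; auto).
  destruct (nodup eq_dec (a :: l)); simpl in *; [contradiction|lia].
Qed.

Lemma mdist_le_length (l : list X) : (mdist X eq_dec l <= length l)%nat.
Proof.
  unfold mdist. induction l as [|a l IH]; simpl; [lia|].
  destruct (in_dec eq_dec a l); simpl; lia.
Qed.

Definition count_sum (f : nat -> R) (p : list X) : R :=
  sum_over (fun j => f (cnt X eq_dec p j)) (nodup eq_dec p).

Lemma count_sum_snoc (f : nat -> R) (p : list X) (a : X) :
  count_sum f (p ++ [a]) = count_sum f p +
    (if in_dec eq_dec a p then f (S (cnt X eq_dec p a)) - f (cnt X eq_dec p a) else f 1%nat).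
Proof.
  unfold count_sum. rewrite (sum_over_perm _ _ _ (nodup_snoc_perm p a)).
  assert (hother : forall x, x <> a -> f (cnt X eq_dec (p ++ [a]) x) = f (cnt X eq_dec p x)).
  { intros x hx. rewrite cnt_snoc. destruct (eq_dec a x); [congruence|]. f_equal. lia. }
  assert (ha : cnt X eq_dec (p ++ [a]) a = S (cnt X eq_dec p a)).
  { rewrite cnt_snoc. destruct (eq_dec a a); [lia|congruence]. }
  destruct (in_dec eq_dec a p) as [hin|hnin].
  - rewrite (sum_over_update (fun j => f (cnt X eq_dec p j)) _ _ a);
      [|apply NoDup_nodup|apply nodup_In; auto|exact hother].
    rewrite ha. lra.
  - simpl. rewrite ha, cnt_not_In by exact hnin.
    rewrite (sum_over_ext_in _ (fun j => f (cnt X eq_dec p j))); [lra|].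
    intros x hx. apply hother. intro; subst. apply nodup_In in hx. contradiction.
Qed.

Lemma count_sum_length (l : list X) : count_sum INR l = INR (length l).
Proof.
  induction l as [|a l IH] using rev_ind; [reflexivity|].
  rewrite count_sum_snoc, IH, length_app, plus_INR. simpl (INR (length [a])).
  destruct (in_dec eq_dec a l); [rewrite S_INR|]; simpl; lra.
Qed.

End Counts.

Section Estimator.
Variable X : Type.
Variable eq_dec : forall a b : X, {a = b} + {a <> b}.
Variables (u : X -> R) (v : nat -> R).
Hypothesis Hu : forall i, 0 < u i.
Hypothesis Hv : forall k, 0 < v k.

Lemma wt_pos (p : list X) (a : X) : 0 < wt X eq_dec u v p a.
Proof. unfold wt. apply Rmult_lt_0_compat; auto. Qed.

Lemma Scond_seen (beta : nat -> R) (p : list X) (a : X) : In a p ->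
  Scond X eq_dec u v beta p a = INR (cnt X eq_dec p a) / (INR (length p) + beta (length p)).
Proof.
  intros h. apply (cnt_pos_iff_In X eq_dec) in h. unfold Scond.
  apply Nat.ltb_lt in h. rewrite h. reflexivity.
Qed.

Lemma Scond_new (beta : nat -> R) (p : list X) (a : X) : ~ In a p ->
  Scond X eq_dec u v beta p a
    = beta (length p) * wt X eq_dec u v p a / (INR (length p) + beta (length p)).
Proof. intros h. unfold Scond. rewrite (cnt_not_In X eq_dec p a h). reflexivity. Qed.

Lemma Scond_pos (beta : nat -> R) (p : list X) (a : X) :
  (forall t, 0 < beta t) -> 0 < Scond X eq_dec u v beta p a.
Proof.
  intros hb. pose proof (pos_INR (length p)). pose proof (hb (length p)).
  destruct (in_dec eq_dec a p) as [hin|hnin].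
  - rewrite Scond_seen by exact hin. apply Rdiv_lt_0_compat; [|lra].
    apply lt_0_INR, (cnt_pos_iff_In X eq_dec), hin.
  - rewrite Scond_new by exact hnin. apply Rdiv_lt_0_compat; [|lra].
    apply Rmult_lt_0_compat; [lra|apply wt_pos].
Qed.

Lemma Saux_pos (beta : nat -> R) (rest p : list X) :
  (forall t, 0 < beta t) -> 0 < Saux X eq_dec u v beta p rest.
Proof.
  intros hb. revert p. induction rest as [|a r IH]; intros p; simpl; [lra|].
  apply Rmult_lt_0_compat; [apply Scond_pos; auto|apply IH].
Qed.

Lemma Scond_first (beta : nat -> R) (a : X) : 0 < beta 0%nat ->
  Scond X eq_dec u v beta [] a = wt X eq_dec u v [] a.
Proof.
  intros hb. rewrite Scond_new by auto. simpl length. simpl INR. field. lra.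
Qed.

(** ln of the maximum likelihood of a prefix p, and the potential of p. *)
Definition ml_term (p : list X) : R :=
  count_sum X eq_dec xlnx p - xlnx (length p).

Definition potential (p : list X) : R :=
  count_sum X eq_dec count_potential p + time_potential (length p)
  + Phi (INR (length p)) (INR (mdist X eq_dec p)).

(** One step of the telescoping argument: reading symbol a after a nonempty
    prefix p with beta_t = beta^*, the regret increment (the code length of a
    if a is new) is paid by the increment of the potential. *)
Lemma regret_step (beta : nat -> R) (p : list X) (a : X) : p <> [] ->
  beta (length p) = beta_opt (INR (length p)) (INR (mdist X eq_dec p)) ->
  ml_term (p ++ [a]) - ml_term p - ln (Scond X eq_dec u v beta p a)
    - (if in_dec eq_dec a p then 0 else ln (/ wt X eq_dec u v p a))
  <= potential (p ++ [a]) - potential p.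
Proof.
  intros hp hbeta.
  set (t := length p) in *. set (m := mdist X eq_dec p) in *.
  assert (ht : (1 <= t)%nat) by (unfold t; destruct p; [congruence|simpl; lia]).
  assert (hm : (1 <= m)%nat) by (apply mdist_pos; auto).
  assert (hmt : (m <= t)%nat) by (apply mdist_le_length).
  unfold ml_term, potential. rewrite !count_sum_snoc, mdist_snoc, length_app.
  replace (length p + length [a])%nat with (S t) by (simpl; unfold t; lia). fold t m.
  destruct (in_dec eq_dec a p) as [hin|hnin].
  - rewrite Scond_seen by exact hin. fold t. rewrite hbeta.
    pose proof (seen_symbol_step (cnt X eq_dec p a) t m
                  ltac:(apply (cnt_pos_iff_In X eq_dec) in hin; lia) hm hmt).
    rewrite Nat.add_0_r, S_INR. lra.
  - rewrite Scond_new by exact hnin. fold t. rewrite hbeta.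
    pose proof (new_symbol_step t m (wt X eq_dec u v p a) hm hmt (wt_pos p a)).
    assert (xlnx 1 = 0) by (unfold xlnx; simpl; rewrite ln_1; ring).
    rewrite plus_INR, S_INR. simpl (INR 1). lra.
Qed.

Lemma regret_telescope (beta : nat -> R) (xs : list X) :
  (forall t, 0 < beta t) ->
  (forall q r, q <> [] -> q ++ r = xs ->
     beta (length q) = beta_opt (INR (length q)) (INR (mdist X eq_dec q))) ->
  forall rest p, p <> [] -> p ++ rest = xs ->
  ml_term (p ++ rest) - ml_term p - ln (Saux X eq_dec u v beta p rest)
    - CLaux X eq_dec u v p rest
  <= potential (p ++ rest) - potential p.
Proof.
  intros hpos hopt. induction rest as [|a r IH]; intros p hp hpr.
  { simpl. rewrite app_nil_r, ln_1. lra. }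
  simpl Saux. simpl CLaux.
  specialize (IH (p ++ [a]) ltac:(destruct p; simpl; congruence)
                ltac:(rewrite <- app_assoc; exact hpr)).
  rewrite <- app_assoc in IH. simpl app in IH.
  rewrite ln_mult by (apply Scond_pos || apply Saux_pos; auto).
  pose proof (regret_step beta p a hp (hopt p (a :: r) hp hpr)).
  lra.
Qed.

Lemma firstn_prefix (p rest xs : list X) : p ++ rest = xs -> firstn (length p) xs = p.
Proof. intros <-. rewrite firstn_app, Nat.sub_diag, firstn_O, app_nil_r, firstn_all. reflexivity. Qed.

Lemma betastar_prefix (b0 : R) (xs q r : list X) : q <> [] -> q ++ r = xs ->
  betastar X eq_dec b0 xs (length q) = beta_opt (INR (length q)) (INR (mdist X eq_dec q)).
Proof.
  intros hq hqr. unfold betastar. destruct (length q) eqn:e.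
  - destruct q; [congruence|discriminate].
  - rewrite <- e, (firstn_prefix q r xs hqr). reflexivity.
Qed.

Lemma betastar_pos (b0 : R) (xs : list X) : 0 < b0 -> xs <> [] ->
  forall t, 0 < betastar X eq_dec b0 xs t.
Proof.
  intros hb hxs [|t]; [exact hb|].
  set (q := firstn (S t) xs).
  change (betastar X eq_dec b0 xs (S t)) with (beta_opt (INR (S t)) (INR (mdist X eq_dec q))).
  assert (hq : q <> []) by (unfold q; destruct xs; [congruence|discriminate]).
  pose proof (mdist_pos X eq_dec q hq). pose proof (mdist_le_length X eq_dec q).
  assert (length q <= S t)%nat by (unfold q; rewrite length_firstn; lia).
  apply beta_opt_pos. split; [apply (le_INR 1)|apply le_INR]; lia.
Qed.

(** After one symbol the potential is 11/12 + 1.16 + (3/2) ln ln 2 >= 0,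
    since ln ln 2 >= 1 - 1/ln 2 > -0.45. *)
Lemma potential_singleton_nonneg (a : X) : 0 <= potential [a].
Proof.
  unfold potential, count_sum, cnt, mdist. simpl.
  destruct (eq_dec a a) as [_|]; [|congruence]. simpl.
  unfold count_potential, time_potential, Phi, Wpot, lnln. simpl INR. rewrite ln_1.
  replace (2*1/1) with 2 by field. replace ((1-1) * ln (1/(1-1))) with 0 by ring.
  pose proof ln2_bounds.
  pose proof (ln_ge_1_sub_inv (ln 2) ltac:(lra)).
  assert (/ ln 2 <= / (6929/10000)) by (apply Rinv_le_contravar; lra).
  lra.
Qed.

Lemma ML_eq_ml_term (xs : list X) : xs <> [] -> ML X eq_dec xs = ml_term xs.
Proof.
  intros hxs. unfold ML, ml_term, count_sum, xlnx.
  assert (hn : 1 <= INR (length xs)) by (apply (le_INR 1); destruct xs; [congruence|simpl; lia]).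
  destruct (ln_prod_powers (cnt X eq_dec xs) (nodup eq_dec xs)) as [h1 h2].
  { intros j hj. apply nodup_In, (cnt_pos_iff_In X eq_dec) in hj. lia. }
  assert (0 < INR (length xs) ^ length xs) by (apply pow_lt; lra).
  rewrite ln_mult, h2, ln_Rinv, ln_pow by (try apply Rinv_0_lt_compat; lra).
  unfold sum_over. ring.
Qed.

(** The regret of beta^* is at most the code length plus the final potential:
    the potential telescopes from the first symbol, where it is nonnegative. *)
Lemma regret_betastar_le (b0 : R) (xs : list X) : 0 < b0 -> xs <> [] ->
  regret X eq_dec u v (betastar X eq_dec b0 xs) xs <= CL X eq_dec u v xs + potential xs.
Proof.
  intros hb0 hxs. destruct xs as [|a r]; [congruence|].
  set (xs := a :: r).
  assert (hpos := betastar_pos b0 xs hb0 hxs).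
  pose proof (regret_telescope (betastar X eq_dec b0 xs) xs hpos
                (fun q r' hq hqr => betastar_prefix b0 xs q r' hq hqr) r [a]
                ltac:(discriminate) eq_refl) as htel.
  simpl app in htel. fold xs in htel.
  unfold regret, Sprob, CL. simpl Saux. simpl CLaux.
  rewrite Scond_first by apply hpos.
  assert (hw := wt_pos [] a).
  rewrite ln_mult, ln_Rinv by (try apply Saux_pos; auto).
  rewrite ML_eq_ml_term by exact hxs.
  assert (ml_term [a] = 0).
  { unfold ml_term, count_sum, cnt. simpl. destruct (eq_dec a a); [|congruence].
    unfold xlnx. simpl. rewrite ln_1. ring. }
  pose proof (potential_singleton_nonneg a).
  lra.
Qed.

(** Comparison of beta^c = beta^*/c with beta^*: since 1 <= c_t <= 2, each
    factor of S changes by at most ln 2, and only at new symbols. *)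
Lemma log_ratio_step (bs bc : nat -> R) (c : R) (p : list X) (a : X) :
  0 < bs (length p) -> 1 <= c <= 2 -> bc (length p) = bs (length p) / c ->
  ln (Scond X eq_dec u v bs p a) - ln (Scond X eq_dec u v bc p a)
  <= (if in_dec eq_dec a p then 0 else ln 2).
Proof.
  intros hbs hc hbc. set (t := length p) in *.
  pose proof (pos_INR t).
  assert (0 < bc t) by (rewrite hbc; apply Rdiv_lt_0_compat; lra).
  assert (bc t <= bs t) by (rewrite hbc; apply div_le_of_le_mul; nra).
  assert (ln (INR t + bc t) <= ln (INR t + bs t)) by (apply ln_le; lra).
  destruct (in_dec eq_dec a p) as [hin|hnin].
  - rewrite !Scond_seen by exact hin. fold t.
    assert (0 < INR (cnt X eq_dec p a)) by (apply lt_0_INR, (cnt_pos_iff_In X eq_dec), hin).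
    rewrite !ln_div by lra. lra.
  - rewrite !Scond_new by exact hnin. fold t.
    assert (hw := wt_pos p a).
    assert (0 < bs t * wt X eq_dec u v p a) by (apply Rmult_lt_0_compat; lra).
    assert (0 < bc t * wt X eq_dec u v p a) by (apply Rmult_lt_0_compat; lra).
    rewrite !ln_div, !ln_mult by lra.
    assert (ln (bs t) - ln (bc t) <= ln 2).
    { rewrite <- ln_div by lra. apply ln_le; [apply Rdiv_lt_0_compat; lra|].
      rewrite hbc. replace (bs t / (bs t / c)) with c by (field; lra). lra. }
    lra.
Qed.

Lemma log_ratio_telescope (bs bc : nat -> R) (c : nat -> R) :
  (forall t, 0 < bs t) -> (forall t, 0 < bc t) ->
  (forall t, (1 <= t)%nat -> 1 <= c t <= 2 /\ bc t = bs t / c t) ->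
  forall rest p, p <> [] ->
  ln (Saux X eq_dec u v bs p rest) - ln (Saux X eq_dec u v bc p rest)
  <= ln 2 * (INR (mdist X eq_dec (p ++ rest)) - INR (mdist X eq_dec p)).
Proof.
  intros hbs hbc hc. induction rest as [|a r IH]; intros p hp.
  { simpl. rewrite app_nil_r. lra. }
  simpl Saux. rewrite !ln_mult by (apply Scond_pos || apply Saux_pos; auto).
  specialize (IH (p ++ [a]) ltac:(destruct p; simpl; congruence)).
  rewrite <- app_assoc in IH. simpl app in IH.
  rewrite mdist_snoc, plus_INR in IH.
  assert (ht : (1 <= length p)%nat) by (destruct p; [congruence|simpl; lia]).
  destruct (hc (length p) ht) as [hct hbct].
  pose proof (log_ratio_step bs bc (c (length p)) p a (hbs _) hct hbct).
  destruct (in_dec eq_dec a p); simpl INR in *; lra.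
Qed.

End Estimator.

Section Bounds.
Variable X : Type.
Variable eq_dec : forall a b : X, {a = b} + {a <> b}.

Lemma potential_final_bound (xs : list X) : xs <> [] ->
  let n := INR (length xs) in let m := INR (mdist X eq_dec xs) in
  potential X eq_dec xs <= - (m - 1) * ln m + sum_half_ln_counts X eq_dec xs - /2 * ln n
     + 3/2 * m * ln (ln (2*n/m)) + 233/100 * m + 86/100.
Proof.
  intros hxs n m.
  assert (1 <= m) by (apply (le_INR 1), mdist_pos, hxs).
  assert (m <= n) by (apply le_INR, mdist_le_length).
  assert (hcounts : count_sum X eq_dec count_potential xs <= n + sum_half_ln_counts X eq_dec xs).
  { unfold n. rewrite <- (count_sum_length X eq_dec). unfold count_sum, sum_half_ln_counts.
    fold (sum_over (fun j => / 2 * ln (INR (cnt X eq_dec xs j))) (nodup eq_dec xs)).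
    rewrite <- sum_over_plus. apply sum_over_le. intros j hj.
    apply nodup_In, (cnt_pos_iff_In X eq_dec) in hj.
    assert (1 <= INR (cnt X eq_dec xs j)) by (apply (le_INR 1); lia).
    unfold count_potential.
    assert (0 < 1/(12*INR (cnt X eq_dec xs j))) by (apply Rdiv_lt_0_compat; lra). lra. }
  pose proof (Wpot_le n m ltac:(lra) ltac:(lra)).
  unfold potential, time_potential, Phi, lnln. fold n m. lra.
Qed.

Variables (u : X -> R) (v : nat -> R).
Hypothesis Hu : forall i, 0 < u i.
Hypothesis Hv : forall k, 0 < v k.

Lemma betac_pos (b0 : R) (c : nat -> R) (xs : list X) : 0 < b0 -> xs <> [] ->
  (forall t, (1 <= t)%nat -> 1 <= c t <= 2) -> forall t, 0 < betac X eq_dec b0 c xs t.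
Proof.
  intros hb hxs hc [|t]; [exact hb|].
  apply Rdiv_lt_0_compat; [apply betastar_pos; auto|]. specialize (hc (S t) ltac:(lia)). lra.
Qed.

Lemma regret_betac_le (b0 : R) (c : nat -> R) (xs : list X) : 0 < b0 -> xs <> [] ->
  (forall t, (1 <= t)%nat -> 1 <= c t <= 2) ->
  regret X eq_dec u v (betac X eq_dec b0 c xs) xs
    <= regret X eq_dec u v (betastar X eq_dec b0 xs) xs + (INR (mdist X eq_dec xs) - 1) * ln 2.
Proof.
  intros hb0 hxs hc. destruct xs as [|a r]; [congruence|].
  set (xs := a :: r) in *.
  assert (hbs := betastar_pos X eq_dec b0 xs hb0 hxs).
  assert (hbc := betac_pos b0 c xs hb0 hxs hc).
  pose proof (log_ratio_telescope X eq_dec u v Hu Hv _ _ c hbs hbc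
                ltac:(intros [|t] ht; [lia|]; split; [apply hc, ht|reflexivity]) r [a]
                ltac:(discriminate)) as h.
  simpl app in h. fold xs in h.
  unfold regret, Sprob. simpl Saux.
  rewrite !Scond_first by auto.
  assert (hw := wt_pos X eq_dec u v Hu Hv [] a).
  rewrite !ln_mult by (try apply Saux_pos; auto).
  change (INR (mdist X eq_dec [a])) with 1 in h. lra.
Qed.

End Bounds.

Theorem mainTheorem7
  (X : Type) (eq_dec : forall a b : X, {a = b} + {a <> b})
  (enumX : list X) (HnodupX : NoDup enumX) (HfullX : forall x : X, In x enumX)
  (u : X -> R) (v : nat -> R)
  (Hu : forall i, 0 < u i) (Hv : forall k, 0 < v k)
  (Hw : forall p : list X, unseen_weight X eq_dec u v enumX p <= 1)
  (b0 : R) (Hb0 : 0 < b0)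
  (c : nat -> R) (Hc : forall t : nat, (1 <= t)%nat -> 1 <= c t <= 2)
  (xs : list X) (Hn : (1 <= length xs)%nat) :
  let n := INR (length xs) in
  let m := INR (mdist X eq_dec xs) in
  regret X eq_dec u v (betac X eq_dec b0 c xs) xs
    <= regret X eq_dec u v (betastar X eq_dec b0 xs) xs + (m - 1) * ln 2
  /\
  regret X eq_dec u v (betac X eq_dec b0 c xs) xs
    <= CL X eq_dec u v xs - (m - 1) * ln m + sum_half_ln_counts X eq_dec xs
       - / 2 * ln n + 3 / 2 * m * ln (ln (2 * n / m)) + 233 / 100 * m + 86 / 100
       + (m - 1) * ln 2.
Proof.
  intros n m.
  assert (hxs : xs <> []) by (destruct xs; simpl in Hn; [lia|discriminate]).
  pose proof (regret_betac_le X eq_dec u v Hu Hv b0 c xs Hb0 hxs Hc) as hcompare.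
  pose proof (regret_betastar_le X eq_dec u v Hu Hv b0 xs Hb0 hxs) as hstar.
  pose proof (potential_final_bound X eq_dec xs hxs) as hfinal. cbv zeta in hfinal.
  fold n m in hcompare, hfinal.
  split; lra.
Qed.
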